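(* Let $R$ be an integral domain, $L_n=R[t_1^{\pm1},\dots,t_n^{\pm1}]=R[\mathbb{Z}^n]$, and $C_*$ a finite free chain complex over $L_n$. Let $k\ge0$ and $q>0$. Then there is a finite family of proper full subgroups $G_i\subset\mathrm{Hom}(\mathbb{Z}^n,\mathbb{Z})$ such that for every $m$ and every homomorphism $p\in\mathrm{Hom}(\mathbb{Z}^n,\mathbb{Z}^m)$ the condition $b_k(C_*,p)\ge b_k(C_* )+q$ is equivalent to: $p\sqsubset G_i$ for some $i$.
   Context: $b_k(C_* )$ is the dimension over the fraction field of $L_n$ of $H_k(C_*\otimes_{L_n}\{L_n\})$. A group homomorphism $p:\mathbb{Z}^n\to\mathbb{Z}^m$ extends to a ring homomorphism $p:L_n\to L_m=R[\mathbb{Z}^m]$; $\mathcal{Q}_m$ denotes the fraction field of $L_m$ and $b_k(C_*,p)=\dim_{\mathcal{Q}_m}H_k(C_*\otimes_p\mathcal{Q}_m)$. A subgroup of $\mathbb{Z}^n$ (or of $\mathrm{Hom}(\mathbb{Z}^n,\mathbb{Z})$) is full if it is a direct summand. For a full subgroup $G\subset\mathrm{Hom}(\mathbb{Z}^n,\mathbb{Z})$, write $p\sqsubset G$ if all coordinates $p_j\in\mathrm{Hom}(\mathbb{Z}^n,\mathbb{Z})$ of $p$ belong to $G$. *)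

From HB Require Import structures.
From mathcomp Require Import all_boot all_order all_algebra.
From mathcomp Require Import finmap.
From mathcomp Require Import mpoly.
From mathcomp Require Import fraction.
Set Implicit Arguments. Unset Strict Implicit. Unset Printing Implicit Defensive.
Import Order.TTheory GRing.Theory Num.Theory.
Local Open Scope ring_scope.

(* Z^n is modelled by row vectors 'rV[int]_n.  A homomorphism
   p : Z^n -> Z^m is a matrix P : 'M[int]_(n, m) acting by a |-> a *m P.
   Hom(Z^n, Z) is modelled by column vectors 'cV[int]_n (phi(a) = a *m phi);
   the coordinates p_j of p are the columns  col j P. *)

(* L_n = R[Z^n]: finitely supported functions Z^n -> R. *)
Definition laurent (R : idomainType) (n : nat) :=
  {fsfun 'rV[int]_n -> R with 0}.

(* A finite free chain complex over L_n, indexed by k >= 0: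
   C_i = L_n^(c i) (row vectors), d i : C_(i+1) -> C_i given by a matrix
   acting on rows.  The complex condition says that the matrix product
   d (i+1) * d i, computed in the group ring R[Z^n] (convolution), is zero. *)
Definition is_chain_complex (R : idomainType) (n : nat) (c : nat -> nat)
  (d : forall i, 'M[laurent R n]_(c i.+1, c i)) : Prop :=
  forall (i : nat) (x : 'I_(c i.+2)) (z : 'I_(c i)) (e : 'rV[int]_n),
    \sum_(j < c i.+1)
      \sum_(a <- finsupp (d i.+1 x j))
        \sum_(b <- finsupp (d i j z) | a + b == e)
          (d i.+1 x j a * d i j z b) = 0.

Definition finite_complex (c : nat -> nat) : Prop :=
  exists N, forall i, (N <= i)%N -> c i = 0%N.

(* Q_m = fraction field of L_m = fraction field of R[t_1,...,t_m]. *)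
Definition Qfield (R : idomainType) (m : nat) := {fraction {mpoly R[m]}}.

Definition Qt (R : idomainType) (m : nat) (i : 'I_m) : Qfield R m :=
  tofrac (mpolyX R (U_(i))%MM).

Definition Qconst (R : idomainType) (m : nat) (r : R) : Qfield R m :=
  tofrac (mpolyC m r).

Definition Qmono (R : idomainType) (m : nat) (a : 'rV[int]_m) : Qfield R m :=
  \prod_(i < m) Qt R i ^ (a 0 i).

Definition push (R : idomainType) (n m : nat) (P : 'M[int]_(n, m))
  (f : laurent R n) : Qfield R m :=
  \sum_(a <- finsupp f) Qconst m (f a) * Qmono R (a *m P).

(* dimension of ker A / im B for  C_(k+1) --B--> C_k --A--> C_(k-1)
   (row-vector convention): rank of a complement of im B in ker A. *)
Definition hdim (F : fieldType) (a b e : nat)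
  (A : 'M[F]_(a, b)) (B : 'M[F]_(e, a)) : nat :=
  \rank (kermx A :\: B)%MS.

(* b_k( C_*, p) = dim_{Q_m} H_k( C_* (x)_p Q_m) *)
Definition betti_p (R : idomainType) (n : nat) (c : nat -> nat)
  (d : forall i, 'M[laurent R n]_(c i.+1, c i)) (k m : nat)
  (P : 'M[int]_(n, m)) : nat :=
  let D i := map_mx (push P) (d i) in
  match k with
  | 0 => hdim (0 : 'M[Qfield R m]_(c 0, 0)) (D 0%N)
  | k'.+1 => hdim (D k') (D k'.+1)
  end.

(* b_k( C_* ) = dim over the fraction field of L_n of H_k( C_* (x) Frac L_n):
   the case p = identity. *)
Definition betti (R : idomainType) (n : nat) (c : nat -> nat)
  (d : forall i, 'M[laurent R n]_(c i.+1, c i)) (k : nat) : nat :=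
  betti_p d k (1%:M : 'M[int]_n).

Definition is_subgroup (n : nat) (G : 'cV[int]_n -> Prop) : Prop :=
  G 0 /\ (forall x y, G x -> G y -> G (x - y)).

(* full = direct summand *)
Definition is_full (n : nat) (G : 'cV[int]_n -> Prop) : Prop :=
  is_subgroup G /\
  exists H : 'cV[int]_n -> Prop, is_subgroup H /\
    (forall x, G x -> H x -> x = 0) /\
    (forall x, exists g h, G g /\ H h /\ x = g + h).

Definition is_proper (n : nat) (G : 'cV[int]_n -> Prop) : Prop :=
  exists x, ~ G x.

Definition sqsub (n m : nat) (P : 'M[int]_(n, m)) (G : 'cV[int]_n -> Prop)
  : Prop := forall j : 'I_m, G (col j P).

(* After base change along p, the rank of a differential is the size of its
   largest nonvanishing minor.  Every minor is a Laurent polynomial whose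
   exponents lie in a finite set W of Z^n independent of p, and distinct
   monomials of Q_m are linearly independent over R, so whether a minor
   vanishes after p only depends on which points of W p identifies: b_k(C, p)
   can only grow when this partition of W is coarsened.  For each of the
   finitely many partitions induced by a p with b_k(C, p) >= b_k(C) + q, take
   G to be the annihilator of the differences of identified points; p is
   contained in G exactly when it coarsens the partition.  G is a direct
   summand by the Smith normal form, and it is proper since otherwise the
   identity, for which b_k(C, 1) = b_k(C), would coarsen the partition. *)

From HB Require Import structures.
From mathcomp Require Import all_boot all_order all_algebra.
From mathcomp Require Import finmap mpoly fraction.
From mathcomp Require Import perm ring.
From Stdlib Require Import Classical_Prop.
Set Implicit Arguments. Unset Strict Implicit. Unset Printing Implicit Defensive.
Import Order.TTheory GRing.Theory Num.Theory.
Local Open Scope ring_scope.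

Section Monomials.
Variable R : idomainType.

HB.instance Definition _ m :=
  GRing.RMorphism.copy (@Qconst R m) ((@tofrac _) \o @mpolyC m R).

Lemma Qt_neq0 m (i : 'I_m) : Qt R i != 0.
Proof.
rewrite /Qt tofrac_eq0; apply/eqP => /(congr1 (mcoeff U_(i)%MM)).
by rewrite mcoeffX mcoeff0 eqxx => /eqP; rewrite oner_eq0.
Qed.

Lemma Qmono0 m : Qmono R (0 : 'rV[int]_m) = 1.
Proof. by rewrite /Qmono big1 // => i _; rewrite mxE expr0z. Qed.

Lemma QmonoD m (a b : 'rV[int]_m) : Qmono R (a + b) = Qmono R a * Qmono R b.
Proof.
rewrite /Qmono -big_split /=; apply: eq_bigr => i _.
by rewrite mxE expfzDr // Qt_neq0.
Qed.

Definition mnm_of_row m (w : 'rV[int]_m) : 'X_{1..m} :=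
  [multinom absz (w ord0 j) | j < m].

Definition nonneg_row m (w : 'rV[int]_m) := forall j, 0 <= w 0 j.

Lemma Qmono_nonneg m (w : 'rV[int]_m) : nonneg_row w ->
  Qmono R w = tofrac 'X_[mnm_of_row w].
Proof.
move=> w_ge0; rewrite /Qmono mpolyXE_id rmorph_prod; apply: eq_bigr => j _.
by rewrite /Qt -(gez0_abs (w_ge0 j)) -exprnP rmorphXn mnmE.
Qed.

Lemma mnm_of_row_inj m (w1 w2 : 'rV[int]_m) : nonneg_row w1 -> nonneg_row w2 ->
  (mnm_of_row w1 == mnm_of_row w2) = (w1 == w2).
Proof.
move=> w1_ge0 w2_ge0; apply/eqP/eqP => [e|-> //]; apply/matrixP => i j.
have := congr1 (fun M : 'X_{1..m} => M j) e; rewrite !mnmE => e_j.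
by rewrite (ord1 i) -(gez0_abs (w1_ge0 j)) -(gez0_abs (w2_ge0 j)) e_j.
Qed.

(* Multiplying by a large monomial t^g moves all exponents into N^m, where
   the monomials are the distinct basis vectors 'X_[_] of R[t_1,...,t_m]. *)
Lemma Qmono_free m (U : seq 'rV[int]_m) (a : 'rV[int]_m -> R) : uniq U ->
  \sum_(u <- U) Qconst m (a u) * Qmono R u = 0 -> forall u, u \in U -> a u = 0.
Proof.
move=> U_uniq sum0 u0 u0U.
pose g : 'rV[int]_m := \row_j \sum_(u <- U) `|u 0 j|.
have shift_ge0 u : u \in U -> nonneg_row (u + g).
  move=> uU j; rewrite !mxE (bigD1_seq u) //= addrA.
  apply: addr_ge0; last exact: sumr_ge0.
  by rewrite -lerBlDr sub0r lerNnormlW.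
have poly0 : \sum_(u <- U) a u *: ('X_[mnm_of_row (u + g)] : {mpoly R[m]}) = 0.
  apply/eqP; rewrite -tofrac_eq0 rmorph_sum; apply/eqP.
  transitivity (\sum_(u <- U) Qconst m (a u) * Qmono R u * Qmono R g);
    last by rewrite -mulr_suml sum0 mul0r.
  rewrite big_seq [RHS]big_seq; apply: eq_bigr => u uU.
  by rewrite -mulrA -QmonoD (Qmono_nonneg (shift_ge0 u uU)) -mul_mpolyC rmorphM.
have := congr1 (mcoeff (mnm_of_row (u0 + g))) poly0; rewrite mcoeff0 raddf_sum /=.
rewrite (bigD1_seq u0) //= mcoeffZ mcoeffX eqxx mulr1 big_seq_cond big1 ?addr0 //.
move=> u /andP[uU ne]; rewrite mcoeffZ mcoeffX.
rewrite (mnm_of_row_inj (shift_ge0 u uU) (shift_ge0 u0 u0U)).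
by rewrite (inj_eq (addIr g)) (negbTE ne) mulr0.
Qed.

End Monomials.

Lemma sum_partition_undup (T U : eqType) (V : nmodType) (s : seq T)
    (g : T -> U) (F : T -> V) :
  \sum_(x <- s) F x = \sum_(u <- undup (map g s)) \sum_(x <- s | g x == u) F x.
Proof.
symmetry; rewrite (eq_bigr _ (fun u _ => big_mkcond _ _)) exchange_big /=.
rewrite !big_seq; apply: eq_bigr => x xs; rewrite -big_mkcond /= -big_filter.
have gx : g x \in undup (map g s) by rewrite mem_undup map_f.
rewrite (_ : filter _ _ = [:: g x]) ?big_seq1 //.
rewrite -(filter_pred1_uniq (undup_uniq _) gx); apply: eq_filter => u.
by rewrite /= eq_sym.
Qed.

Section LaurentExpressions.
Variables (R : idomainType) (n : nat).

(* A Laurent polynomial of L_n kept as an unreduced list of terms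
   (exponent, coefficient): its image in Q_m under any p is computed by
   [leval], and the exponents occurring in it do not depend on p. *)
Definition lexpr := seq ('rV[int]_n * R).

Definition leval m (P : 'M[int]_(n, m)) (L : lexpr) : Qfield R m :=
  \sum_(t <- L) Qconst m t.2 * Qmono R (t.1 *m P).

Definition lexpr_mul (L1 L2 : lexpr) : lexpr :=
  [seq (t1.1 + t2.1, t1.2 * t2.2) | t1 <- L1, t2 <- L2].
Definition lexpr_opp (L : lexpr) : lexpr := [seq (t.1, - t.2) | t <- L].
Definition lexpr_prod (Ls : seq lexpr) : lexpr := foldr lexpr_mul [:: (0, 1)] Ls.
Definition lexpr_of (f : laurent R n) : lexpr := [seq (a, f a) | a <- finsupp f].

Definition lexpr_det r (N : 'M[laurent R n]_r) : lexpr :=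
  flatten [seq (if odd_perm s then lexpr_opp else id)
                 (lexpr_prod [seq lexpr_of (N i (s i)) | i <- index_enum 'I_r])
          | s <- index_enum {perm 'I_r}].

Section Evaluation.
Variables (m : nat) (P : 'M[int]_(n, m)).

Lemma leval_flatten Ls : leval P (flatten Ls) = \sum_(L <- Ls) leval P L.
Proof.
elim: Ls => [|L Ls IH]; first by rewrite big_nil /leval big_nil.
by rewrite big_cons /= /leval big_cat -IH.
Qed.

Lemma leval_mul L1 L2 : leval P (lexpr_mul L1 L2) = leval P L1 * leval P L2.
Proof.
rewrite /leval big_allpairs_dep mulr_suml; apply: eq_bigr => t1 _.
rewrite mulr_sumr; apply: eq_bigr => t2 _ /=.
by rewrite rmorphM mulmxDl QmonoD; ring.
Qed.

Lemma leval_opp L : leval P (lexpr_opp L) = - leval P L.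
Proof. by rewrite /leval big_map -sumrN; apply: eq_bigr => t _; rewrite rmorphN mulNr. Qed.

Lemma leval_prod Ls : leval P (lexpr_prod Ls) = \prod_(L <- Ls) leval P L.
Proof.
elim: Ls => [|L Ls IH]; last by rewrite big_cons /= leval_mul IH.
by rewrite big_nil /leval big_seq1 /= rmorph1 mul0mx Qmono0 mulr1.
Qed.

Lemma leval_of f : leval P (lexpr_of f) = push P f.
Proof. by rewrite /leval big_map. Qed.

Lemma det_map_push r (N : 'M[laurent R n]_r) :
  \det (map_mx (push P) N) = leval P (lexpr_det N).
Proof.
rewrite leval_flatten big_map; apply: eq_bigr => s _.
have -> : \prod_i map_mx (push P) N i (s i) =
          leval P (lexpr_prod [seq lexpr_of (N i (s i)) | i <- index_enum 'I_r]).
  by rewrite leval_prod big_map; apply: eq_bigr => i _; rewrite mxE leval_of.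
by case: (odd_perm s); rewrite ?leval_opp /= ?expr1 ?expr0 ?mulN1r ?mul1r.
Qed.

End Evaluation.

Definition coarsens (W : seq 'rV[int]_n) m0 m (P0 : 'M[int]_(n, m0))
    (P : 'M[int]_(n, m)) :=
  forall u v, u \in W -> v \in W -> u *m P0 = v *m P0 -> u *m P = v *m P.

Lemma sub_coarsens (W1 W2 : seq 'rV[int]_n) m0 m (P0 : 'M[int]_(n, m0))
    (P : 'M[int]_(n, m)) :
  {subset W1 <= W2} -> coarsens W2 P0 P -> coarsens W1 P0 P.
Proof. by move=> W12 P0P u v uW vW; apply: P0P; apply: W12. Qed.

Definition fiber_sum m (P : 'M[int]_(n, m)) (L : lexpr) (u : 'rV[int]_m) :=
  \sum_(t <- L | t.1 *m P == u) t.2.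

Lemma leval_fibers m (P : 'M[int]_(n, m)) L : leval P L =
  \sum_(u <- undup [seq t.1 *m P | t <- L]) Qconst m (fiber_sum P L u) * Qmono R u.
Proof.
rewrite /leval (sum_partition_undup _ (fun t => t.1 *m P)); apply: eq_bigr => u _.
by rewrite rmorph_sum mulr_suml; apply: eq_bigr => t /eqP ->.
Qed.

Lemma leval_eq0P m (P : 'M[int]_(n, m)) L :
  leval P L = 0 <-> forall u, fiber_sum P L u = 0.
Proof.
split=> [|L0]; last by rewrite leval_fibers big1 // => u _; rewrite L0 rmorph0 mul0r.
rewrite leval_fibers => L0 u.
have [uL|uL] := boolP (u \in undup [seq t.1 *m P | t <- L]).
  exact: Qmono_free (undup_uniq _) L0 u uL.
rewrite /fiber_sum big1_seq // => t /andP[/eqP tu tL]; case/negP: uL.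
by rewrite mem_undup -tu (map_f (fun t => t.1 *m P)).
Qed.

Lemma leval_eq0_coarsen m0 m (P0 : 'M[int]_(n, m0)) (P : 'M[int]_(n, m)) L :
  coarsens [seq t.1 | t <- L] P0 P -> leval P0 L = 0 -> leval P L = 0.
Proof.
move=> P0P /leval_eq0P L0; apply/leval_eq0P => v.
rewrite /fiber_sum big_mkcond (sum_partition_undup _ (fun t => t.1 *m P0)).
rewrite big1_seq //= => u; rewrite mem_undup => /mapP[t0 t0L ->].
have fiber t : t \in L -> t.1 *m P0 == t0.1 *m P0 -> t.1 *m P = t0.1 *m P.
  by move=> tL /eqP; apply: P0P; apply: (map_f fst).
have [t0v|t0v] := eqVneq (t0.1 *m P) v.
  rewrite -[RHS](L0 (t0.1 *m P0)) /fiber_sum big_seq_cond [RHS]big_seq_cond.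
  apply: eq_bigr => t /andP[tL e].
  by rewrite fiber // t0v eqxx.
rewrite big1_seq // => t /andP[e tL].
by rewrite fiber // (negbTE t0v).
Qed.

End LaurentExpressions.

Section Ranks.
Variable F : fieldType.

Lemma rank_ge_minor a b r (f : 'I_r -> 'I_a) (g : 'I_r -> 'I_b) (A : 'M[F]_(a, b)) :
  \det (mxsub f g A) != 0 -> (r <= \rank A)%N.
Proof.
move=> det_neq0; have : mxsub f g A \in unitmx by rewrite unitmxE unitfE.
move/mxrank_unit => {1}<-; rewrite mxsubrc rowsubE.
apply: leq_trans (mxrankM_maxr _ _) _.
by rewrite -[A]mulmx1 -mulmx_colsub mulmx1 mxrankM_maxl.
Qed.

Lemma rank_minor a b (A : 'M[F]_(a, b)) :
  exists (f : {ffun 'I_(\rank A) -> 'I_a}) (g : {ffun 'I_(\rank A) -> 'I_b}),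
    \det (mxsub f g A) != 0.
Proof.
set B := rowsub (maxrankfun A) A.
have rkBT : \rank B^T = \rank A by rewrite mxrank_tr; apply/eqP/maxrowsub_free.
move: (maxrankfun B^T) (maxrowsub_free B^T); rewrite rkBT => g g_free.
exists (maxrankfun A), g; rewrite mxsubcr -unitfE -unitmxE -row_free_unit.
rewrite (_ : colsub g B = (rowsub g B^T)^T); last by apply/matrixP => i j; rewrite !mxE.
by rewrite /row_free mxrank_tr.
Qed.

Lemma hdimE a b e (A : 'M[F]_(a, b)) (B : 'M[F]_(e, a)) :
  B *m A = 0 -> hdim A B = (a - \rank A - \rank B)%N.
Proof.
move=> BA0; rewrite /hdim.
have := mxrank_cap_compl (kermx A) B.
by rewrite (capmx_idPr _) ?sub_kermx ?BA0 // mxrank_ker => <-; rewrite addKn.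
Qed.

End Ranks.

Section Complex.
Variables (R : idomainType) (n : nat) (c : nat -> nat).
Variable d : forall i, 'M[laurent R n]_(c i.+1, c i).

Lemma push_complex (hcx : is_chain_complex d) i m (P : 'M[int]_(n, m)) :
  map_mx (push P) (d i.+1) *m map_mx (push P) (d i) = 0.
Proof.
apply/matrixP => x z; rewrite !mxE.
pose L := flatten [seq lexpr_mul (lexpr_of (d i.+1 x j)) (lexpr_of (d i j z))
                  | j <- index_enum 'I_(c i.+1)].
have -> : \sum_j map_mx (push P) (d i.+1) x j * map_mx (push P) (d i) j z = leval P L.
  rewrite leval_flatten big_map; apply: eq_bigr => j _.
  by rewrite !mxE leval_mul !leval_of.
(* [hcx] says that the entry vanishes in L_n, i.e. after the identity, which
   every P coarsens. *)
apply: (@leval_eq0_coarsen _ _ _ _ 1%:M); first by move=> u v _ _; rewrite !mulmx1 => ->.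
apply/leval_eq0P => e; rewrite -[RHS](hcx i x z e) /fiber_sum big_flatten big_map.
apply: eq_bigr => j _; rewrite big_mkcond big_allpairs_dep big_map.
apply: eq_bigr => a _; rewrite big_map [RHS]big_mkcond; apply: eq_bigr => b _.
by rewrite /= mulmx1.
Qed.

Definition rank_push m (P : 'M[int]_(n, m)) i := \rank (map_mx (push P) (d i)).

Lemma betti_pE (hcx : is_chain_complex d) k m (P : 'M[int]_(n, m)) :
  betti_p d k P =
  (c k - (if k is k'.+1 then rank_push P k' else 0) - rank_push P k)%N.
Proof.
by case: k => [|k]; rewrite /betti_p hdimE ?mulmx0 ?mxrank0 ?push_complex.
Qed.

Definition minor_exponents i : seq 'rV[int]_n :=
  flatten [seq flatten [seq flatten
    [seq [seq t.1 | t <- lexpr_det (mxsub f g (d i))]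
    | g : {ffun 'I_r -> 'I_(c i)} <- index_enum {ffun 'I_r -> 'I_(c i)}]
    | f : {ffun 'I_r -> 'I_(c i.+1)} <- index_enum {ffun 'I_r -> 'I_(c i.+1)}]
    | r <- iota 0 (c i.+1).+1].

(* A maximal nonzero minor after P stays nonzero after P0. *)
Lemma rank_push_coarsen i m0 m (P0 : 'M[int]_(n, m0)) (P : 'M[int]_(n, m)) :
  coarsens (minor_exponents i) P0 P -> (rank_push P i <= rank_push P0 i)%N.
Proof.
move=> P0P; have [f [g minor_neq0]] := rank_minor (map_mx (push P) (d i)).
apply: (rank_ge_minor (f := f) (g := g)); move: minor_neq0.
rewrite -!map_mxsub !det_map_push; apply: contra => /eqP minor0; apply/eqP.
apply: leval_eq0_coarsen minor0; apply: sub_coarsens P0P => _ /mapP[t tL ->].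
apply/flatten_mapP; exists (rank_push P i).
  by rewrite mem_iota add0n ltnS rank_leq_row.
apply/flatten_mapP; exists f; first exact: mem_index_enum.
apply/flatten_mapP; exists g; first exact: mem_index_enum.
exact: map_f.
Qed.

Definition betti_exponents k : seq 'rV[int]_n :=
  if k is k'.+1 then minor_exponents k' ++ minor_exponents k else minor_exponents 0.

Lemma betti_p_coarsen (hcx : is_chain_complex d) k m0 m (P0 : 'M[int]_(n, m0))
    (P : 'M[int]_(n, m)) :
  coarsens (betti_exponents k) P0 P -> (betti_p d k P0 <= betti_p d k P)%N.
Proof.
move=> P0P; rewrite !betti_pE //; case: k P0P => [|k] /= P0P.
  exact/leq_sub2l/rank_push_coarsen.
apply: leq_sub; [apply: leq_sub2l|]; apply: rank_push_coarsen;
  apply: sub_coarsens P0P => u uW; by rewrite mem_cat uW ?orbT.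
Qed.

End Complex.

Lemma nth_ordP (T : eqType) (x0 : T) (s : seq T) x :
  x \in s -> exists i : 'I_(size s), nth x0 s i = x.
Proof. by move=> xs; exists (Ordinal (etrans (index_mem x s) xs)); apply: nth_index. Qed.

Section FullSubgroups.
Variable n : nat.

Lemma full_coord_subgroup (Z : pred 'I_n) :
  is_full (fun psi : 'cV[int]_n => forall j, Z j -> psi j 0 = 0).
Proof.
have subgroup (Y : pred 'I_n) :
    is_subgroup (fun psi : 'cV[int]_n => forall j, Y j -> psi j 0 = 0).
  split=> [j _|x y x0 y0 j Yj]; first by rewrite mxE.
  by rewrite !mxE x0 // y0 // subr0.
split; first exact: subgroup.
exists (fun psi => forall j, ~~ Z j -> psi j 0 = 0); split; first exact: subgroup.
split=> [x Gx Hx|x].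
  apply/matrixP => j k; rewrite (ord1 k) mxE.
  by case Zj: (Z j); [apply: Gx | apply: Hx]; rewrite Zj.
exists (\col_j (if Z j then 0 else x j 0)), (\col_j (if Z j then x j 0 else 0)).
split=> [j Zj|]; first by rewrite mxE Zj.
split=> [j Zj|]; first by rewrite mxE (negbTE Zj).
by apply/matrixP => j k; rewrite (ord1 k) !mxE; case: (Z j); rewrite ?add0r ?addr0.
Qed.

Lemma full_unitmx_preim (U : 'M[int]_n) (G G' : 'cV[int]_n -> Prop) :
  U \in unitmx -> (forall phi, G' phi <-> G (U *m phi)) -> is_full G -> is_full G'.
Proof.
move=> Uunit G'E [[G0 GB] [H [[H0 HB] [GH0 GH]]]].
have UK psi : U *m (invmx U *m psi) = psi by rewrite mulKVmx.
split.
  split=> [|x y]; rewrite !G'E ?mulmx0 // mulmxBr; exact: GB.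
exists (fun phi => H (U *m phi)); split.
  by split=> [|x y]; rewrite ?mulmx0 // mulmxBr; apply: HB.
split=> [x /G'E Gx Hx|x].
  by rewrite -(mulKmx Uunit x) (GH0 _ Gx Hx) mulmx0.
have [g [h [Gg [Hh xE]]]] := GH (U *m x).
exists (invmx U *m g), (invmx U *m h); rewrite G'E !UK.
by rewrite -mulmxDr -xE mulKmx.
Qed.

Definition annihilator (vs : seq 'rV[int]_n) (phi : 'cV[int]_n) : Prop :=
  forall v, v \in vs -> v *m phi = 0.

Lemma annihilatorE (vs : seq 'rV[int]_n) phi :
  annihilator vs phi <-> (\matrix_(i < size vs) nth 0 vs i) *m phi = 0.
Proof.
split=> [vs0|vs0 v vin].
  by apply/row_matrixP => i; rewrite row_mul rowK row0 vs0 // mem_nth.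
have [i <-] := nth_ordP 0 vin.
by move/(congr1 (row i)): vs0; rewrite row_mul rowK row0.
Qed.

Lemma diag_mulmx_eq0 a (s : seq int) (psi : 'cV[int]_n) :
  \matrix_(i < a, j < n) (s`_i *+ (i == j :> nat)) *m psi = 0 <->
  forall j : 'I_n, (j < a)%N && (s`_j != 0) -> psi j 0 = 0.
Proof.
split=> [D0 j /andP[ja sj0]|psi0].
  have := congr1 (fun M : 'cV[int]_a => M (Ordinal ja) 0) D0.
  rewrite !mxE (bigD1 j) //= mxE eqxx mulr1n big1 ?addr0 => [/eqP|k kj].
    by rewrite mulf_eq0 (negbTE sj0) => /eqP.
  by move: kj; rewrite mxE -val_eqE eq_sym => /negbTE /= ->; rewrite mulr0n mul0r.
apply/matrixP => i k; rewrite (ord1 k) !mxE big1 // => j _; rewrite mxE.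
have [ij|] := eqVneq (i : nat) j; last by rewrite mulr0n mul0r.
have [s0|s0] := eqVneq s`_i 0; first by rewrite s0 mul0r.
by rewrite psi0 ?mulr0 // -ij ltn_ord s0.
Qed.

Lemma full_annihilator (vs : seq 'rV[int]_n) : is_full (annihilator vs).
Proof.
set V := \matrix_(i < size vs) nth 0 vs i.
have [L Lunit [U Uunit [s _ VE]]] := int_Smith_normal_form V.
apply: (full_unitmx_preim Uunit _ (full_coord_subgroup _)) => phi.
apply: (iff_trans _ (diag_mulmx_eq0 (size vs) s (U *m phi))).
rewrite annihilatorE -/V VE -!mulmxA; split=> [|->]; last by rewrite mulmx0.
by move/(congr1 (mulmx (invmx L))); rewrite mulKmx // mulmx0.
Qed.

End FullSubgroups.

Lemma finite_family (X : finType) (T : Type) (good : X -> Prop) (f : X -> T) :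
  exists (N : nat) (F : 'I_N -> T),
    (forall i, exists2 x, good x & F i = f x) /\
    (forall x, good x -> exists i, F i = f x).
Proof.
suff [N [F [Fgood goodF]]] : exists (N : nat) (F : 'I_N -> T),
    (forall i, exists2 x, good x & F i = f x) /\
    (forall x, x \in enum X -> good x -> exists i, F i = f x).
  by exists N, F; split=> // x; apply: goodF; rewrite mem_enum.
elim: (enum X) => [|x s [N [F [Fgood goodF]]]].
  by exists 0%N, (fun i : 'I_0 => False_rect T (notF (ltn_ord i))); split=> [[]|].
have [gx|ngx] := classic (good x); last first.
  exists N, F; split=> // y; rewrite in_cons => /orP[/eqP -> /ngx []|]; exact: goodF.
exists N.+1, (fun i => if unlift ord0 i is Some j then F j else f x); split.
  by move=> i; case: unlift => [j|]; [apply: Fgood | exists x].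
move=> y; rewrite in_cons => /orP[/eqP ->|ys gy]; first by exists ord0; rewrite unlift_none.
by have [j <-] := goodF y ys gy; exists (lift ord0 j); rewrite liftK.
Qed.

Section Jumps.
Variables (R : idomainType) (n : nat) (c : nat -> nat).
Variable d : forall i, 'M[laurent R n]_(c i.+1, c i).
Variable k : nat.

Let W := betti_exponents d k.
Let w (i : 'I_(size W)) := nth 0 W i.

Definition kernel_rel m (P : 'M[int]_(n, m)) : {set 'I_(size W) * 'I_(size W)} :=
  [set ij | w ij.1 *m P == w ij.2 *m P].

Definition rel_subgroup (rho : {set 'I_(size W) * 'I_(size W)}) :=
  annihilator [seq w ij.1 - w ij.2 | ij <- enum rho].

Lemma sqsub_rel_subgroup m0 m (P0 : 'M[int]_(n, m0)) (P : 'M[int]_(n, m)) :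
  sqsub P (rel_subgroup (kernel_rel P0)) <-> coarsens W P0 P.
Proof.
have col_mul (v : 'rV[int]_n) j : v *m col j P = col j (v *m P).
  by rewrite !colE mulmxA.
have mulmx_eq0 (v : 'rV[int]_n) : (forall j, v *m col j P = 0) <-> v *m P = 0.
  split=> [v0|vP0 j]; last by rewrite col_mul vP0 col0.
  by apply/matrixP => i j; move/matrixP/(_ i 0): (v0 j); rewrite col_mul !mxE.
split=> [PG u v uW vW|P0P j v /mapP[ij]].
  have [[i1 <-] [i2 <-]] := (nth_ordP 0 uW, nth_ordP 0 vW) => uv.
  apply/eqP; rewrite -subr_eq0 -mulmxBl; apply/eqP/mulmx_eq0 => j.
  apply: PG; apply/mapP; exists (i1, i2) => //.
  by rewrite mem_enum inE /w /= uv.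
rewrite mem_enum inE => /eqP ij_P0 ->; rewrite col_mul mulmxBl.
by rewrite (P0P _ _ _ _ ij_P0) ?subrr ?col0 // mem_nth.
Qed.

Hypothesis hcx : is_chain_complex d.
Variable q : nat.
Hypothesis q_gt0 : (0 < q)%N.

Lemma proper_rel_subgroup m0 (P0 : 'M[int]_(n, m0)) :
  (betti d k + q <= betti_p d k P0)%N -> is_proper (rel_subgroup (kernel_rel P0)).
Proof.
move=> jump; apply: NNPP => not_proper.
have : sqsub 1%:M (rel_subgroup (kernel_rel P0)).
  by move=> j; apply: NNPP => notG; apply: not_proper; exists (col j 1%:M).
move/sqsub_rel_subgroup/(betti_p_coarsen hcx)/(leq_trans jump).
by rewrite -[X in (_ <= X)%N]addn0 leq_add2l leqn0 (gtn_eqF q_gt0).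
Qed.

End Jumps.

Theorem theorem7p3 (R : idomainType) (n : nat) (c : nat -> nat)
  (d : forall i, 'M[laurent R n]_(c i.+1, c i))
  (hfin : finite_complex c) (hcx : is_chain_complex d)
  (k q : nat) (hq : (0 < q)%N) :
  exists (N : nat) (G : 'I_N -> ('cV[int]_n -> Prop)),
    (forall i, is_full (G i) /\ is_proper (G i)) /\
    forall (m : nat) (P : 'M[int]_(n, m)),
      (betti d k + q <= betti_p d k P)%N <-> exists i, sqsub P (G i).
Proof.
pose jumps rho := exists m0 (P0 : 'M[int]_(n, m0)),
  rho = kernel_rel d k P0 /\ (betti d k + q <= betti_p d k P0)%N.
have [N [G [Gjumps jumpsG]]] := finite_family jumps (@rel_subgroup _ _ _ d k).
exists N, G; split=> [i|m P].
  have [_ [m0 [P0 [-> jump]]] ->] := Gjumps i.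
  by split; [apply: full_annihilator | apply: proper_rel_subgroup jump].
split=> [jump|[i]].
  have [i Gi] := jumpsG (kernel_rel d k P) (ex_intro _ m (ex_intro _ P (conj erefl jump))).
  by exists i; rewrite Gi; apply/sqsub_rel_subgroup.
have [_ [m0 [P0 [-> jump]]] ->] := Gjumps i.
by move/sqsub_rel_subgroup/(betti_p_coarsen hcx); apply: leq_trans jump.
Qed.
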